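(* For $p\in\mathbb{R}$, the function $h_p(x)=(1-x)^pK(x)$ is log-concave on $(0,1)$ if and only if $p\ge 7/32$, and log-convex on $(0,1)$ if and only if $p\le 0$.
   Context: $K(x)={\cal K}(\sqrt x)=\frac\pi2\,{}_2F_1(1/2,1/2;1;x)$ for $x\in[0,1)$, where ${\cal K}(r)=\int_0^{\pi/2}(1-r^2\sin^2t)^{-1/2}dt$ is the complete elliptic integral of the first kind. *)

From Stdlib Require Import Reals.
From Coquelicot Require Import Coquelicot.
Open Scope R_scope.

(* Complete elliptic integral of the first kind in the parameter x = r^2:
   K(x) = Kc(sqrt x) = int_0^{pi/2} (1 - x sin^2 t)^{-1/2} dt, x in [0,1). *)
Definition K (x : R) : R :=
  RInt (fun t => / sqrt (1 - x * (sin t) ^ 2)) 0 (PI / 2).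

Definition h (p x : R) : R := Rpower (1 - x) p * K x.

Definition concave_on (f : R -> R) (a b : R) : Prop :=
  forall x y t, a < x < b -> a < y < b -> 0 <= t <= 1 ->
    t * f x + (1 - t) * f y <= f (t * x + (1 - t) * y).

Definition convex_on (f : R -> R) (a b : R) : Prop :=
  forall x y t, a < x < b -> a < y < b -> 0 <= t <= 1 ->
    f (t * x + (1 - t) * y) <= t * f x + (1 - t) * f y.

Definition log_concave_on (f : R -> R) (a b : R) : Prop :=
  (forall x, a < x < b -> 0 < f x) /\ concave_on (fun x => ln (f x)) a b.

Definition log_convex_on (f : R -> R) (a b : R) : Prop :=
  (forall x, a < x < b -> 0 < f x) /\ convex_on (fun x => ln (f x)) a b.

(* Write r = E/K. Legendre's formulas for E' and K' give
     (ln h_p)' = - p / (1 - x) + (r - (1 - x)) / (2 x (1 - x)),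
     2 x (1 - x) r' = (1 - x) (2 r - 1) - r^2,
   so that (ln h_p)'' has the sign of 1 - 3x + (3 - 4p) x^2 - (r - x)^2.
   Comparing r with sub- and supersolutions of this Riccati equation gives
   1 - x <= r <= 1 - x/2 on (0,1), and r >= x + sqrt (1 - 3x + 17 x^2 / 8) wherever the
   root is real and x < 2/3. The first two bounds make the numerator nonnegative when
   p <= 0; with the third they make it nonpositive when p >= 7/32.
   Conversely, (ln h_p)' tends to 1/4 - p at 0 but exceeds that value near 0 when
   p < 7/32, so it is not nonincreasing; and for p > 0 it tends to -oo at 1, because
   K (1 - s^2) >= - ln s blows up while E stays bounded, so it is not nondecreasing. *)

From Stdlib Require Import Reals Lra Psatz.
From Coquelicot Require Import Coquelicot.
Open Scope R_scope.

Lemma continuous_of_is_derive (f : R -> R) x l : is_derive f x l -> continuous f x.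
Proof. intros H. apply (@ex_derive_continuous R_AbsRing R_NormedModule). now exists l. Qed.

Lemma exists_small b c e : 0 < b -> 0 < c -> 0 < e -> exists y, 0 < y <= b /\ y * c <= e.
Proof.
  intros Hb Hc He. exists (Rmin b (e / c)).
  pose proof (Rmin_l b (e / c)). pose proof (Rmin_r b (e / c)).
  pose proof (Rmin_glb_lt b (e / c) 0 Hb (Rdiv_lt_0_compat _ _ He Hc)).
  assert (e / c * c = e) by (field; lra).
  split; [lra|]. apply Rle_trans with (e / c * c); [apply Rmult_le_compat_r|]; lra.
Qed.

Lemma derive_nonneg_of_right_min g x l d : 0 < d -> is_derive g x l ->
  (forall t, 0 < t < d -> g x <= g (x + t)) -> 0 <= l.
Proof.
  intros Hd Hg Hmin. destruct (Rle_lt_dec 0 l) as [|Hl]; [assumption | exfalso].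
  apply is_derive_Reals in Hg. destruct (Hg (- l) ltac:(lra)) as [del Hdel].
  pose proof (cond_pos del).
  destruct (exists_small (d / 2) 1 (del / 2)) as [t [Ht Htdel]]; [lra..|].
  specialize (Hdel t ltac:(lra) ltac:(rewrite Rabs_pos_eq; lra)).
  apply Rabs_lt_between in Hdel.
  pose proof (Hmin t ltac:(lra)).
  assert (0 <= (g (x + t) - g x) / t) by (apply Rdiv_le_0_compat; lra).
  lra.
Qed.

Lemma derive_nonpos_of_left_min g x l d : 0 < d -> is_derive g x l ->
  (forall t, 0 < t < d -> g x <= g (x - t)) -> l <= 0.
Proof.
  intros Hd Hg Hmin.
  assert (Hneg : is_derive (fun y => g (- y)) (- x) (- l)).
  { rewrite <- (Ropp_involutive x) in Hg. auto_derive.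
    - exists l. exact Hg.
    - replace (Derive _ _) with l by (symmetry; apply is_derive_unique, Hg). ring. }
  enough (0 <= - l) by lra.
  apply (derive_nonneg_of_right_min _ _ _ d Hd Hneg). intros t Ht.
  rewrite Ropp_involutive. replace (- (- x + t)) with (x - t) by ring. apply Hmin, Ht.
Qed.

Lemma MVT_le f df a b : a <= b -> (forall x, a <= x <= b -> is_derive f x (df x)) ->
  exists c, a <= c <= b /\ f b - f a = df c * (b - a).
Proof.
  intros Hab Hd. destruct (MVT_gen f a b df) as [c [Hc Heq]].
  - intros x Hx. rewrite Rmin_left, Rmax_right in Hx by lra. apply Hd; lra.
  - intros x Hx. rewrite Rmin_left, Rmax_right in Hx by lra.
    apply continuity_pt_filterlim, (continuous_of_is_derive _ _ (df x)), Hd; lra.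
  - exists c. rewrite Rmin_left, Rmax_right in Hc by lra. split; assumption.
Qed.

Section OnInterval.

Variables (f df : R -> R) (a b : R).
Hypothesis f_derive : forall x, a < x < b -> is_derive f x (df x).

Lemma nondecreasing_of_derive_nonneg : (forall x, a < x < b -> 0 <= df x) ->
  forall x y, a < x -> x <= y -> y < b -> f x <= f y.
Proof.
  intros Hpos x y Hx Hxy Hy.
  destruct (MVT_le f df x y Hxy) as [c [Hc Heq]]; [intros; apply f_derive; lra|].
  pose proof (Hpos c ltac:(lra)). nra.
Qed.

Lemma concave_on_of_derive_nonincreasing :
  (forall x y, a < x -> x <= y -> y < b -> df y <= df x) -> concave_on f a b.
Proof.
  intros Hanti.
  enough (Hle : forall x y t, a < x -> x <= y -> y < b -> 0 <= t <= 1 ->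
            t * f x + (1 - t) * f y <= f (t * x + (1 - t) * y)).
  { intros x y t Hx Hy Ht. destruct (Rle_dec x y); [apply Hle; lra|].
    replace (t * x + (1 - t) * y) with ((1 - t) * y + (1 - (1 - t)) * x) by ring.
    pose proof (Hle y x (1 - t) ltac:(lra) ltac:(lra) ltac:(lra) ltac:(lra)). lra. }
  intros x y t Hx Hxy Hy Ht. set (z := t * x + (1 - t) * y).
  assert (Hz : x <= z <= y) by (unfold z; nra).
  destruct (MVT_le f df x z (proj1 Hz)) as [c1 [Hc1 E1]]; [intros; apply f_derive; lra|].
  destruct (MVT_le f df z y (proj2 Hz)) as [c2 [Hc2 E2]]; [intros; apply f_derive; lra|].
  pose proof (Hanti c1 c2 ltac:(lra) ltac:(lra) ltac:(lra)).
  assert (z - x = (1 - t) * (y - x)) by (unfold z; ring).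
  assert (y - z = t * (y - x)) by (unfold z; ring).
  assert (0 <= t * (1 - t) * (y - x)) by (apply Rmult_le_pos; [apply Rmult_le_pos|]; lra).
  nra.
Qed.

Lemma concave_on_le_tangent : concave_on f a b ->
  forall x z, a < x < b -> a < z < b -> f z <= f x + df x * (z - x).
Proof.
  intros Hc x z Hx Hz.
  set (D := fun t => f (x + t * (z - x)) - t * f z - (1 - t) * f x).
  assert (HD : is_derive D 0 (df x * (z - x) - f z + f x)).
  { unfold D. auto_derive.
    - exists (df x). rewrite Rmult_0_l, Rplus_0_r. apply f_derive, Hx.
    - replace (Derive _ _) with (df x); [ring|].
      rewrite Rmult_0_l, Rplus_0_r. symmetry. apply is_derive_unique, f_derive, Hx. }
  enough (0 <= df x * (z - x) - f z + f x) by lra.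
  apply (derive_nonneg_of_right_min D 0 _ 1 Rlt_0_1 HD). intros t Ht.
  unfold D. rewrite Rplus_0_l, Rmult_0_l, Rplus_0_r. ring_simplify.
  replace (x + t * (z - x)) with (t * z + (1 - t) * x) by ring.
  pose proof (Hc z x t Hz Hx ltac:(lra)). lra.
Qed.

Lemma derive_nonincreasing_of_concave_on : concave_on f a b ->
  forall x y, a < x -> x < y -> y < b -> df y <= df x.
Proof.
  intros Hc x y Hx Hxy Hy.
  pose proof (concave_on_le_tangent Hc x y ltac:(lra) ltac:(lra)).
  pose proof (concave_on_le_tangent Hc y x ltac:(lra) ltac:(lra)).
  nra.
Qed.

End OnInterval.

Lemma concave_on_opp f a b : convex_on f a b -> concave_on (fun x => - f x) a b.
Proof. intros Hc x y t Hx Hy Ht. pose proof (Hc x y t Hx Hy Ht). lra. Qed.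

Lemma convex_on_of_concave_on_opp f a b : concave_on (fun x => - f x) a b -> convex_on f a b.
Proof. intros Hc x y t Hx Hy Ht. pose proof (Hc x y t Hx Hy Ht). lra. Qed.

Section OnIntervalOpp.

Variables (f df : R -> R) (a b : R).
Hypothesis f_derive : forall x, a < x < b -> is_derive f x (df x).

Lemma opp_derive x : a < x < b -> is_derive (fun y => - f y) x (- df x).
Proof. intros Hx. apply (@is_derive_opp R_AbsRing R_NormedModule), f_derive, Hx. Qed.

Lemma nonincreasing_of_derive_nonpos : (forall x, a < x < b -> df x <= 0) ->
  forall x y, a < x -> x <= y -> y < b -> f y <= f x.
Proof.
  intros Hneg x y Hx Hxy Hy.
  enough (- f x <= - f y) by lra.
  apply (nondecreasing_of_derive_nonneg _ (fun x => - df x) a b opp_derive); try assumption.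
  intros z Hz. pose proof (Hneg z Hz). lra.
Qed.

Lemma convex_on_of_derive_nondecreasing :
  (forall x y, a < x -> x <= y -> y < b -> df x <= df y) -> convex_on f a b.
Proof.
  intros Hmono. apply convex_on_of_concave_on_opp.
  apply (concave_on_of_derive_nonincreasing _ (fun x => - df x) a b opp_derive).
  intros x y Hx Hxy Hy. pose proof (Hmono x y Hx Hxy Hy). lra.
Qed.

Lemma derive_nondecreasing_of_convex_on : convex_on f a b ->
  forall x y, a < x -> x < y -> y < b -> df x <= df y.
Proof.
  intros Hc x y Hx Hxy Hy.
  enough (- df y <= - df x) by lra.
  apply (derive_nonincreasing_of_concave_on _ (fun x => - df x) a b opp_derive);
    [apply concave_on_opp, Hc | assumption..].
Qed.

End OnIntervalOpp.

Lemma nonneg_of_barrier g dg x : 0 < x ->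
  (forall y, 0 < y <= x -> is_derive g y (dg y)) ->
  (forall y, 0 < y <= x -> g y < 0 -> 0 < dg y) ->
  (forall y, 0 < y <= x -> - y <= g y) -> 0 <= g x.
Proof.
  intros Hx Hd Hpos Hlow. destruct (Rle_lt_dec 0 (g x)) as [|Hgx]; [assumption | exfalso].
  destruct (exists_small (x / 2) 1 (- g x / 2)) as [y0 [Hy0 Hy0g]]; [lra..|].
  pose proof (Hlow y0 ltac:(lra)).
  destruct (continuity_ab_min g y0 x ltac:(lra)) as [m [Hmin Hm]].
  { intros c Hc. apply continuity_pt_filterlim, (continuous_of_is_derive _ _ (dg c)), Hd. lra. }
  pose proof (Hmin x ltac:(lra)). pose proof (Hmin y0 ltac:(lra)).
  assert (Hmy : y0 < m) by (destruct (Req_dec m y0); [subst m; lra | lra]).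
  pose proof (Hpos m ltac:(lra) ltac:(lra)).
  (* m minimizes g on [y0, x], so its derivative from the left cannot be positive. *)
  assert (dg m <= 0); [|lra].
  apply (derive_nonpos_of_left_min g m _ (m - y0)); [lra | apply Hd; lra |].
  intros t Ht. apply Hmin. lra.
Qed.

Definition elliptic_RInt (phi : R -> R) (x : R) : R :=
  RInt (fun t => phi (1 - x * sin t ^ 2)) 0 (PI / 2).

Definition E (x : R) : R := elliptic_RInt sqrt x.

Lemma K_elliptic_RInt x : K x = elliptic_RInt (fun w => / sqrt w) x.
Proof. reflexivity. Qed.

Lemma sin_sqr_bound t : 0 <= sin t ^ 2 <= 1.
Proof. pose proof (SIN_bound t). nra. Qed.

Lemma radicand_pos x t : x < 1 -> 0 < 1 - x * sin t ^ 2.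
Proof. intros Hx. pose proof (sin_sqr_bound t). destruct (Rle_dec x 0); nra. Qed.

Lemma radicand_bound x t : 0 <= x -> 1 - x <= 1 - x * sin t ^ 2 <= 1.
Proof. intros Hx. pose proof (sin_sqr_bound t). nra. Qed.

Lemma continuous_radicand x t : continuous (fun s => 1 - x * sin s ^ 2) t.
Proof. apply (@ex_derive_continuous R_AbsRing R_NormedModule). auto_derive. exact I. Qed.

Lemma ex_RInt_elliptic (phi : R -> R) x : x < 1 -> (forall w, 0 < w -> continuous phi w) ->
  ex_RInt (fun t => phi (1 - x * sin t ^ 2)) 0 (PI / 2).
Proof.
  intros Hx Hphi. apply (@ex_RInt_continuous R_CompleteNormedModule). intros t _.
  apply (continuous_comp (fun s => 1 - x * sin s ^ 2) phi).
  - apply continuous_radicand.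
  - apply Hphi, radicand_pos, Hx.
Qed.

Lemma is_RInt_elliptic (phi : R -> R) x : x < 1 -> (forall w, 0 < w -> continuous phi w) ->
  is_RInt (fun t => phi (1 - x * sin t ^ 2)) 0 (PI / 2) (elliptic_RInt phi x).
Proof.
  intros Hx Hphi. apply (@RInt_correct R_CompleteNormedModule), ex_RInt_elliptic; assumption.
Qed.

Lemma continuity_2d_pt_sin_sqr x t : continuity_2d_pt (fun _ v => sin v ^ 2) x t.
Proof.
  apply (continuity_1d_2d_pt_comp (fun z => sin z ^ 2) (fun _ v => v)).
  - apply continuity_pt_filterlim, (@ex_derive_continuous R_AbsRing R_NormedModule).
    auto_derive. exact I.
  - apply continuity_2d_pt_id2.
Qed.

Section EllipticRInt.

Variables (phi dphi : R -> R).
Hypothesis phi_derive : forall w, 0 < w -> is_derive phi w (dphi w).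
Hypothesis dphi_cont : forall w, 0 < w -> continuous dphi w.

Lemma continuity_2d_pt_elliptic_derive x t : x < 1 ->
  continuity_2d_pt (fun u v => - sin v ^ 2 * dphi (1 - u * sin v ^ 2)) x t.
Proof.
  intros Hx. apply continuity_2d_pt_mult.
  - apply continuity_2d_pt_opp, continuity_2d_pt_sin_sqr.
  - apply (continuity_1d_2d_pt_comp dphi (fun u v => 1 - u * sin v ^ 2)).
    + apply continuity_pt_filterlim, dphi_cont, radicand_pos, Hx.
    + apply continuity_2d_pt_minus; [apply continuity_2d_pt_const|].
      apply continuity_2d_pt_mult; [apply continuity_2d_pt_id1|].
      apply continuity_2d_pt_sin_sqr.
Qed.

Lemma is_derive_elliptic_radicand y t : y < 1 ->
  is_derive (fun u => phi (1 - u * sin t ^ 2)) y (- sin t ^ 2 * dphi (1 - y * sin t ^ 2)).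
Proof.
  intros Hy. apply (is_derive_comp phi (fun u => 1 - u * sin t ^ 2)).
  - apply phi_derive, radicand_pos, Hy.
  - auto_derive; [exact I | ring].
Qed.

Lemma is_derive_elliptic_RInt x : x < 1 ->
  is_derive (elliptic_RInt phi) x
    (RInt (fun t => - sin t ^ 2 * dphi (1 - x * sin t ^ 2)) 0 (PI / 2)).
Proof.
  intros Hx.
  assert (Hloc : locally x (fun y => y < 1)) by (apply open_lt; exact Hx).
  erewrite RInt_ext; cycle 1.
  { intros t _. symmetry. apply is_derive_unique, is_derive_elliptic_radicand, Hx. }
  apply (is_derive_RInt_param (fun u t => phi (1 - u * sin t ^ 2))).
  - apply filter_imp with (2 := Hloc). intros y Hy t _.
    eexists. apply is_derive_elliptic_radicand, Hy.
  - intros t _.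
    apply continuity_2d_pt_ext_loc
      with (f := fun u v => - sin v ^ 2 * dphi (1 - u * sin v ^ 2)).
    + assert (Hd : 0 < (1 - x) / 2) by lra.
      exists (mkposreal _ Hd). intros u v Hu _. simpl in Hu.
      apply Rabs_lt_between' in Hu.
      symmetry. apply is_derive_unique, is_derive_elliptic_radicand. lra.
    + apply continuity_2d_pt_elliptic_derive, Hx.
  - apply filter_imp with (2 := Hloc). intros y Hy. apply ex_RInt_elliptic; [exact Hy|].
    intros w Hw. apply (continuous_of_is_derive _ _ _ (phi_derive _ Hw)).
Qed.

End EllipticRInt.

Lemma is_derive_inv_sqrt w : 0 < w -> is_derive (fun v => / sqrt v) w (- / (2 * w * sqrt w)).
Proof.
  intros Hw. pose proof (sqrt_lt_R0 _ Hw). pose proof (sqrt_sqrt _ (Rlt_le _ _ Hw)).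
  auto_derive; [lra|]. set (s := sqrt w) in *. rewrite <- H0. field. lra.
Qed.

Lemma continuous_inv_sqrt_deriv w : 0 < w -> continuous (fun v => - / (2 * v * sqrt v)) w.
Proof.
  intros Hw. pose proof (sqrt_lt_R0 _ Hw).
  apply (@ex_derive_continuous R_AbsRing R_NormedModule). auto_derive. nra.
Qed.

Lemma is_derive_sqrt_pos w : 0 < w -> is_derive sqrt w (/ (2 * sqrt w)).
Proof. intros Hw. auto_derive; [lra | field; apply Rgt_not_eq, sqrt_lt_R0, Hw]. Qed.

Lemma continuous_sqrt_deriv w : 0 < w -> continuous (fun v => / (2 * sqrt v)) w.
Proof.
  intros Hw. pose proof (sqrt_lt_R0 _ Hw).
  apply (@ex_derive_continuous R_AbsRing R_NormedModule). auto_derive. lra.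
Qed.

Lemma continuous_sqrt_pos w : 0 < w -> continuous sqrt w.
Proof. intros _. apply continuous_sqrt. Qed.

Lemma continuous_inv_sqrt w : 0 < w -> continuous (fun v => / sqrt v) w.
Proof. intros Hw. apply (continuous_of_is_derive _ _ _ (is_derive_inv_sqrt w Hw)). Qed.

Lemma is_RInt_E x : x < 1 -> is_RInt (fun t => sqrt (1 - x * sin t ^ 2)) 0 (PI / 2) (E x).
Proof. intros Hx. apply (is_RInt_elliptic sqrt); [exact Hx | apply continuous_sqrt_pos]. Qed.

Lemma is_RInt_K x : x < 1 -> is_RInt (fun t => / sqrt (1 - x * sin t ^ 2)) 0 (PI / 2) (K x).
Proof.
  intros Hx. apply (is_RInt_elliptic (fun w => / sqrt w)); [exact Hx | apply continuous_inv_sqrt].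
Qed.

Lemma is_derive_E x : 0 < x < 1 -> is_derive E x ((E x - K x) / (2 * x)).
Proof.
  intros Hx.
  replace ((E x - K x) / (2 * x))
    with (RInt (fun t => - sin t ^ 2 * / (2 * sqrt (1 - x * sin t ^ 2))) 0 (PI / 2)).
  { apply (is_derive_elliptic_RInt sqrt (fun v => / (2 * sqrt v)));
      [apply is_derive_sqrt_pos | apply continuous_sqrt_deriv | lra]. }
  apply is_RInt_unique.
  apply is_RInt_ext with (f := fun t => / (2 * x) *
    (sqrt (1 - x * sin t ^ 2) - / sqrt (1 - x * sin t ^ 2))).
  - (* [is_RInt_ext] states the equation in the carrier of [R_NormedModule]; [field] needs [R]. *)
    intros t _. match goal with |- @eq _ ?a ?b => change (@eq R a b) end.
    pose proof (radicand_pos x t (proj2 Hx)) as Hu.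
    pose proof (sqrt_lt_R0 _ Hu). pose proof (sqrt_sqrt _ (Rlt_le _ _ Hu)).
    set (w := sqrt _) in *. field_simplify_eq; lra.
  - replace ((E x - K x) / (2 * x)) with (/ (2 * x) * (E x - K x)) by (field; lra).
    apply (@is_RInt_scal R_NormedModule), (@is_RInt_minus R_NormedModule).
    + apply is_RInt_E; lra.
    + apply is_RInt_K; lra.
Qed.

Lemma is_RInt_legendre x : x < 1 ->
  is_RInt (fun t => (1 - 2 * sin t ^ 2 + x * sin t ^ 4)
    / ((1 - x * sin t ^ 2) * sqrt (1 - x * sin t ^ 2))) 0 (PI / 2) 0.
Proof.
  intros Hx.
  set (f := fun t => sin t * cos t / sqrt (1 - x * sin t ^ 2)).
  assert (Hf : minus (f (PI / 2)) (f 0) = 0).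
  { unfold f, minus, plus, opp; simpl. rewrite cos_PI2, sin_0. lra. }
  enough (HI : is_RInt (fun t => (1 - 2 * sin t ^ 2 + x * sin t ^ 4)
    / ((1 - x * sin t ^ 2) * sqrt (1 - x * sin t ^ 2))) 0 (PI / 2) (minus (f (PI / 2)) (f 0)))
    by (rewrite Hf in HI; exact HI).
  apply (@is_RInt_derive R_CompleteNormedModule).
  - intros t _. pose proof (radicand_pos x t Hx) as Hu.
    pose proof (sqrt_lt_R0 _ Hu). pose proof (sqrt_sqrt _ (Rlt_le _ _ Hu)).
    pose proof (sin2_cos2 t) as Hsc. unfold Rsqr in Hsc.
    unfold f. auto_derive;
      replace (1 + - (x * (sin t * (sin t * 1)))) with (1 - x * sin t ^ 2) by ring.
    + split; [lra | split; [lra | exact I]].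
    + set (w := sqrt _) in *. set (u := 1 - x * sin t ^ 2) in *.
      transitivity (((cos t ^ 2 - sin t ^ 2) * u + x * sin t ^ 2 * cos t ^ 2) / (u * w)).
      * rewrite <- H0. field; lra.
      * replace (cos t ^ 2) with (1 - sin t ^ 2) by lra. unfold u in *. field. split; lra.
  - intros t _. pose proof (radicand_pos x t Hx) as Hu. pose proof (sqrt_lt_R0 _ Hu).
    apply (@ex_derive_continuous R_AbsRing R_NormedModule). auto_derive.
    replace (1 + - (x * (sin t * (sin t * 1)))) with (1 - x * sin t ^ 2) by ring.
    repeat split; try lra. apply Rmult_integral_contrapositive_currified; lra.
Qed.

Lemma is_derive_K x : 0 < x < 1 -> is_derive K x ((E x / (1 - x) - K x) / (2 * x)).
Proof.
  intros Hx.
  replace ((E x / (1 - x) - K x) / (2 * x))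
    with (RInt (fun t => - sin t ^ 2 * - / (2 * (1 - x * sin t ^ 2) * sqrt (1 - x * sin t ^ 2)))
            0 (PI / 2)).
  { apply (is_derive_elliptic_RInt (fun w => / sqrt w) (fun v => - / (2 * v * sqrt v)));
      [apply is_derive_inv_sqrt | apply continuous_inv_sqrt_deriv | lra]. }
  apply is_RInt_unique.
  apply is_RInt_ext with (f := fun t => / (2 * x) *
    (/ (1 - x) * (sqrt (1 - x * sin t ^ 2)
       - x * ((1 - 2 * sin t ^ 2 + x * sin t ^ 4)
              / ((1 - x * sin t ^ 2) * sqrt (1 - x * sin t ^ 2))))
     - / sqrt (1 - x * sin t ^ 2))).
  - intros t _. match goal with |- @eq _ ?a ?b => change (@eq R a b) end.
    pose proof (radicand_pos x t (proj2 Hx)) as Hu.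
    pose proof (sqrt_lt_R0 _ Hu). pose proof (sqrt_sqrt _ (Rlt_le _ _ Hu)).
    set (w := sqrt _) in *.
    assert (Hs : sin t ^ 2 = (1 - w * w) / x) by (rewrite H0; field; lra).
    replace (sin t ^ 4) with ((sin t ^ 2) ^ 2) by ring.
    rewrite Hs. field. repeat split; lra.
  - replace ((E x / (1 - x) - K x) / (2 * x))
      with (/ (2 * x) * (/ (1 - x) * (E x - x * 0) - K x)) by (field; lra).
    apply (@is_RInt_scal R_NormedModule), (@is_RInt_minus R_NormedModule).
    + apply (@is_RInt_scal R_NormedModule), (@is_RInt_minus R_NormedModule).
      * apply is_RInt_E; lra.
      * apply (@is_RInt_scal R_NormedModule), is_RInt_legendre; lra.
    + apply is_RInt_K; lra.
Qed.

Lemma elliptic_RInt_le (phi psi : R -> R) x : 0 <= x < 1 ->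
  (forall w, 0 < w -> continuous phi w) -> (forall w, 0 < w -> continuous psi w) ->
  (forall w, 1 - x <= w <= 1 -> phi w <= psi w) ->
  elliptic_RInt phi x <= elliptic_RInt psi x.
Proof.
  intros Hx Hphi Hpsi Hle. apply RInt_le.
  - left. apply PI2_RGT_0.
  - apply ex_RInt_elliptic; [lra | exact Hphi].
  - apply ex_RInt_elliptic; [lra | exact Hpsi].
  - intros t _. apply Hle, radicand_bound. lra.
Qed.

Lemma elliptic_RInt_const c x : elliptic_RInt (fun _ => c) x = c * (PI / 2).
Proof. unfold elliptic_RInt. rewrite RInt_const, Rminus_0_r. apply Rmult_comm. Qed.

Lemma continuous_const_pos (c w : R) : 0 < w -> continuous (fun _ => c) w.
Proof. intros _. apply continuous_const. Qed.

Lemma inv_sqrt_bounds w : 0 < w <= 1 -> 1 <= / sqrt w /\ sqrt w <= 1 /\ sqrt w <= / sqrt w.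
Proof.
  intros Hw. pose proof (sqrt_lt_R0 _ (proj1 Hw)). pose proof (sqrt_sqrt _ (Rlt_le _ _ (proj1 Hw))).
  assert (Hs : sqrt w <= 1) by nra.
  assert (Hi : 1 <= / sqrt w) by (rewrite <- Rinv_1; apply Rinv_le_contravar; lra).
  repeat split; lra.
Qed.

Lemma K_ge_PI2 x : 0 <= x < 1 -> PI / 2 <= K x.
Proof.
  intros Hx. rewrite K_elliptic_RInt, <- (Rmult_1_l (PI / 2)), <- (elliptic_RInt_const 1 x).
  apply elliptic_RInt_le; [exact Hx | apply continuous_const_pos | apply continuous_inv_sqrt |].
  intros w Hw. apply inv_sqrt_bounds. lra.
Qed.

Lemma K_pos x : 0 <= x < 1 -> 0 < K x.
Proof. intros Hx. pose proof (K_ge_PI2 x Hx). pose proof PI2_RGT_0. lra. Qed.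

Lemma E_le_PI2 x : 0 <= x < 1 -> E x <= PI / 2.
Proof.
  intros Hx. rewrite <- (Rmult_1_l (PI / 2)), <- (elliptic_RInt_const 1 x).
  apply elliptic_RInt_le; [exact Hx | apply continuous_sqrt_pos | apply continuous_const_pos |].
  intros w Hw. apply inv_sqrt_bounds. lra.
Qed.

Lemma E_le_K x : 0 <= x < 1 -> E x <= K x.
Proof.
  intros Hx. rewrite K_elliptic_RInt.
  apply elliptic_RInt_le; [exact Hx | apply continuous_sqrt_pos | apply continuous_inv_sqrt |].
  intros w Hw. apply inv_sqrt_bounds. lra.
Qed.

Lemma E_ge_scaled_K x : 0 <= x < 1 -> (1 - x) * K x <= E x.
Proof.
  intros Hx.
  replace ((1 - x) * K x) with (elliptic_RInt (fun w => (1 - x) * / sqrt w) x).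
  - apply elliptic_RInt_le; [exact Hx | | apply continuous_sqrt_pos |].
    + intros w Hw.
      apply (@continuous_scal_r R_UniformSpace R_AbsRing R_NormedModule
               (1 - x) (fun v => / sqrt v)).
      apply continuous_inv_sqrt, Hw.
    + intros w Hw. pose proof (sqrt_lt_R0 w ltac:(lra)). pose proof (sqrt_sqrt w ltac:(lra)).
      apply (Rmult_le_reg_r (sqrt w)); [lra|]. rewrite Rmult_assoc, Rinv_l; lra.
  - rewrite K_elliptic_RInt. unfold elliptic_RInt.
    apply (@RInt_scal R_CompleteNormedModule), (ex_RInt_elliptic (fun w => / sqrt w));
      [lra | apply continuous_inv_sqrt].
Qed.

Lemma is_RInt_inv_shift s : 0 < s ->
  is_RInt (fun t => / (s + (PI / 2 - t))) 0 (PI / 2) (ln (s + PI / 2) - ln s).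
Proof.
  intros Hs. pose proof PI2_RGT_0.
  set (f := fun t => - ln (s + (PI / 2 - t))).
  assert (Hf : minus (f (PI / 2)) (f 0) = ln (s + PI / 2) - ln s).
  { unfold f, minus, plus, opp; simpl. rewrite Rminus_diag, Rplus_0_r, Rminus_0_r. ring. }
  rewrite <- Hf. apply (@is_RInt_derive R_CompleteNormedModule).
  - intros t Ht. rewrite Rmin_left, Rmax_right in Ht by lra.
    unfold f. auto_derive; [lra | field; lra].
  - intros t Ht. rewrite Rmin_left, Rmax_right in Ht by lra.
    apply (@ex_derive_continuous R_AbsRing R_NormedModule). auto_derive. lra.
Qed.

Lemma sqrt_radicand_le_shift s t : 0 < s < 1 -> 0 < t < PI / 2 ->
  sqrt (1 - (1 - s ^ 2) * sin t ^ 2) <= s + (PI / 2 - t).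
Proof.
  intros Hs Ht.
  assert (Hcos : 0 <= cos t) by (apply cos_ge_0; lra).
  assert (Hcos_lt : cos t < PI / 2 - t) by (rewrite <- sin_shift; apply sin_lt_x; lra).
  apply Rle_trans with (s + cos t); [|lra].
  rewrite <- (sqrt_pow2 (s + cos t)) by lra. apply sqrt_le_1_alt.
  pose proof (sin2_cos2 t) as Hsc. unfold Rsqr in Hsc. pose proof (sin_sqr_bound t). nra.
Qed.

Lemma K_ge_neg_ln s : 0 < s < 1 -> - ln s <= K (1 - s ^ 2).
Proof.
  intros Hs. pose proof PI2_RGT_0.
  assert (Hln : 0 < ln (s + PI / 2)).
  { rewrite <- ln_1. apply ln_increasing; [lra|]. pose proof PI2_1. lra. }
  apply Rle_trans with (RInt (fun t => / (s + (PI / 2 - t))) 0 (PI / 2)).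
  { rewrite (is_RInt_unique _ _ _ _ (is_RInt_inv_shift s (proj1 Hs))). lra. }
  apply RInt_le; [lra | eexists; apply is_RInt_inv_shift, Hs |
                  apply (ex_RInt_elliptic (fun w => / sqrt w)); [nra | apply continuous_inv_sqrt] |].
  intros t Ht. pose proof (radicand_pos (1 - s ^ 2) t ltac:(nra)).
  apply Rinv_le_contravar; [apply sqrt_lt_R0; lra|].
  apply sqrt_radicand_le_shift; assumption.
Qed.

Definition riccati x y := (1 - x) * (2 * y - 1) - y ^ 2.

Lemma riccati_diff x y1 y2 :
  riccati x y1 - riccati x y2 = (y1 - y2) * (2 * (1 - x) - y1 - y2).
Proof. unfold riccati. ring. Qed.

Section RiccatiComparison.

Variables (rho b db : R -> R) (x : R).
Hypothesis x_range : 0 < x < 1.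
Hypothesis rho_derive : forall y, 0 < y <= x ->
  is_derive rho y (riccati y (rho y) / (2 * y * (1 - y))).
Hypothesis rho_ge : forall y, 0 < y <= x -> 1 - y <= rho y.
Hypothesis b_derive : forall y, 0 < y <= x -> is_derive b y (db y).

Lemma riccati_supersolution_ge :
  (forall y, 0 < y <= x -> 1 - y <= b y) ->
  (forall y, 0 < y <= x -> riccati y (b y) < 2 * y * (1 - y) * db y) ->
  (forall y, 0 < y <= x -> rho y - b y <= y) -> rho x <= b x.
Proof.
  intros b_ge Hsuper Hinit.
  enough (0 <= b x - rho x) by lra.
  apply (nonneg_of_barrier (fun y => b y - rho y)
           (fun y => db y - riccati y (rho y) / (2 * y * (1 - y)))); [lra | | | ].
  - intros y Hy. apply (@is_derive_minus R_AbsRing R_NormedModule); auto.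
  - intros y Hy Hneg.
    pose proof (riccati_diff y (rho y) (b y)). pose proof (rho_ge y Hy). pose proof (b_ge y Hy).
    pose proof (Hsuper y Hy). assert (0 < 2 * y * (1 - y)) by nra.
    assert (riccati y (rho y) / (2 * y * (1 - y)) < db y); [|lra].
    apply (Rmult_lt_reg_r (2 * y * (1 - y))); [lra|]. field_simplify; nra.
  - intros y Hy. pose proof (Hinit y Hy). lra.
Qed.

Lemma riccati_subsolution_le :
  (forall y, 0 < y <= x -> 2 * y * (1 - y) * db y < riccati y (b y)) ->
  (forall y, 0 < y <= x -> b y - rho y <= y) -> b x <= rho x.
Proof.
  intros Hsub Hinit.
  enough (0 <= rho x - b x) by lra.
  apply (nonneg_of_barrier (fun y => rho y - b y)
           (fun y => riccati y (rho y) / (2 * y * (1 - y)) - db y)); [lra | | | ].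
  - intros y Hy. apply (@is_derive_minus R_AbsRing R_NormedModule); auto.
  - intros y Hy Hneg.
    pose proof (riccati_diff y (rho y) (b y)). pose proof (rho_ge y Hy).
    pose proof (Hsub y Hy). assert (0 < 2 * y * (1 - y)) by nra.
    assert (db y < riccati y (rho y) / (2 * y * (1 - y))); [|lra].
    apply (Rmult_lt_reg_r (2 * y * (1 - y))); [lra|]. field_simplify; nra.
  - intros y Hy. pose proof (Hinit y Hy). lra.
Qed.

End RiccatiComparison.

Definition EK x := E x / K x.

Lemma is_derive_EK x : 0 < x < 1 -> is_derive EK x (riccati x (EK x) / (2 * x * (1 - x))).
Proof.
  intros Hx. pose proof (K_pos x ltac:(lra)) as HK.
  pose proof (is_derive_div E K x _ _ (is_derive_E x Hx) (is_derive_K x Hx) ltac:(lra)) as Hd.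
  match type of Hd with
  | is_derive _ _ ?l => replace l with (riccati x (EK x) / (2 * x * (1 - x))) in Hd
  end.
  - exact Hd.
  - unfold riccati, EK. field. lra.
Qed.

Lemma EK_ge x : 0 < x < 1 -> 1 - x <= EK x.
Proof.
  intros Hx. pose proof (K_pos x ltac:(lra)). pose proof (E_ge_scaled_K x ltac:(lra)).
  unfold EK. apply (Rmult_le_reg_r (K x)); [lra|]. field_simplify; lra.
Qed.

Lemma EK_le_1 x : 0 < x < 1 -> EK x <= 1.
Proof.
  intros Hx. pose proof (K_pos x ltac:(lra)). pose proof (E_le_K x ltac:(lra)).
  unfold EK. apply (Rmult_le_reg_r (K x)); [lra|]. field_simplify; lra.
Qed.

Lemma EK_le_div_K x : 0 < x < 1 -> EK x <= 2 / K x.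
Proof.
  intros Hx. pose proof (K_pos x ltac:(lra)). pose proof (E_le_PI2 x ltac:(lra)). pose proof PI_4.
  unfold EK. apply Rmult_le_compat_r; [left; apply Rinv_0_lt_compat|]; lra.
Qed.

Lemma EK_le x : 0 < x < 1 -> EK x <= 1 - x / 2.
Proof.
  intros Hx.
  apply (riccati_supersolution_ge EK (fun y => 1 - y / 2) (fun _ => - / 2) x Hx).
  - intros y Hy. apply is_derive_EK. lra.
  - intros y Hy. apply EK_ge. lra.
  - intros y Hy. auto_derive; [exact I | field].
  - intros y Hy. lra.
  - intros y Hy. unfold riccati. nra.
  - intros y Hy. pose proof (EK_le_1 y ltac:(lra)). lra.
Qed.

(* At p = 7/32 the numerator of [ln_h''] below is [Q x - (EK x - x) ^ 2]. *)
Definition Q x := 1 - 3 * x + 17 / 8 * x ^ 2.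
Definition lower_barrier x := x + sqrt (Q x).
Definition lower_barrier' x := 1 + (17 / 4 * x - 3) / (2 * sqrt (Q x)).

Lemma Q_antitone y x : 0 < y <= x -> x < 2 / 3 -> Q x <= Q y.
Proof. intros. unfold Q. nra. Qed.

Lemma is_derive_lower_barrier y : 0 < Q y -> is_derive lower_barrier y (lower_barrier' y).
Proof.
  intros HQ. pose proof (sqrt_lt_R0 _ HQ). unfold lower_barrier, lower_barrier', Q in *.
  auto_derive.
  - lra.
  - replace (1 + - (3 * y) + 17 / 8 * (y * (y * 1))) with (1 - 3 * y + 17 / 8 * y ^ 2) by ring.
    field. lra.
Qed.

Lemma lower_barrier_bounds y : 0 < y < 2 / 3 -> 0 < Q y -> 1 - y <= lower_barrier y <= 1.
Proof.
  intros Hy HQ. unfold lower_barrier. split.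
  - destruct (Rle_dec (1 - 2 * y) 0); [pose proof (sqrt_pos (Q y)); lra|].
    enough (1 - 2 * y <= sqrt (Q y)) by lra.
    rewrite <- (sqrt_pow2 (1 - 2 * y)) by lra. apply sqrt_le_1_alt. unfold Q. nra.
  - enough (sqrt (Q y) <= 1 - y) by lra.
    rewrite <- (sqrt_pow2 (1 - y)) by lra. apply sqrt_le_1_alt. unfold Q. nra.
Qed.

Lemma lower_barrier_subsolution y : 0 < y < 2 / 3 -> 0 < Q y ->
  2 * y * (1 - y) * lower_barrier' y < riccati y (lower_barrier y).
Proof.
  intros Hy HQ. unfold lower_barrier', lower_barrier.
  pose proof (sqrt_lt_R0 _ HQ) as HS. pose proof (sqrt_sqrt _ (Rlt_le _ _ HQ)) as HS2.
  set (S := sqrt (Q y)) in *. clearbody S.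
  set (A := 2 - 4 * y + 25 / 8 * y ^ 2). set (P := 2 - 7 * y + 9 * y ^ 2 - 17 / 4 * y ^ 3).
  assert (Hid : (riccati y (y + S) - 2 * y * (1 - y) * (1 + (17 / 4 * y - 3) / (2 * S))) * S
                = P - A * S).
  { unfold riccati.
    replace ((_ - _) * S) with ((- y ^ 2 + 2 * (1 - y) * y - (1 - y) - 2 * y * (1 - y)) * S
      + (2 * (1 - y) - 2 * y) * (S * S) - (S * S) * S - y * (1 - y) * (17 / 4 * y - 3))
      by (field; lra).
    rewrite HS2. unfold A, P, Q. field. }
  assert (HA : 0 < A) by (unfold A; nra).
  assert (HP : 0 < P).
  { assert (0 <= (2 / 3 - y) * (26 / 9 - 37 / 6 * y + 17 / 4 * y ^ 2)) by (apply Rmult_le_pos; nra).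
    unfold P. nra. }
  assert (HD : P * P - A * A * (S * S)
               = y ^ 3 * (3 / 2 - 309 / 64 * y + 379 / 64 * y ^ 2 - 1377 / 512 * y ^ 3)).
  { rewrite HS2. unfold A, P, Q. field. }
  assert (0 < 3 / 2 - 309 / 64 * y + 379 / 64 * y ^ 2 - 1377 / 512 * y ^ 3).
  { assert (0 <= (2 / 3 - y) * (797 / 384 - 1057 / 256 * y + 1377 / 512 * y ^ 2))
      by (apply Rmult_le_pos; nra).
    nra. }
  assert (0 < y ^ 3) by (apply pow_lt; lra).
  assert (0 < P - A * S).
  { assert (0 < (P - A * S) * (P + A * S)) by nra. assert (0 < P + A * S) by nra. nra. }
  nra.
Qed.

Lemma lower_barrier_le_EK x : 0 < x < 2 / 3 -> 0 < Q x -> lower_barrier x <= EK x.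
Proof.
  intros Hx HQx.
  assert (HQ : forall y, 0 < y <= x -> 0 < Q y)
    by (intros y Hy; pose proof (Q_antitone y x Hy ltac:(lra)); lra).
  apply (riccati_subsolution_le EK lower_barrier lower_barrier' x ltac:(lra)).
  - intros y Hy. apply is_derive_EK. lra.
  - intros y Hy. apply EK_ge. lra.
  - intros y Hy. apply is_derive_lower_barrier, HQ, Hy.
  - intros y Hy. apply lower_barrier_subsolution; [lra | apply HQ, Hy].
  - intros y Hy. pose proof (lower_barrier_bounds y ltac:(lra) (HQ y Hy)).
    pose proof (EK_ge y ltac:(lra)). lra.
Qed.

Definition ln_h' p x := - p / (1 - x) + (EK x - (1 - x)) / (2 * x * (1 - x)).

Definition ln_h'' p x :=
  (1 - 3 * x + (3 - 4 * p) * x ^ 2 - (EK x - x) ^ 2) / (4 * x ^ 2 * (1 - x) ^ 2).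

Lemma h_pos p x : 0 < x < 1 -> 0 < h p x.
Proof. intros Hx. apply Rmult_lt_0_compat; [apply exp_pos | apply K_pos; lra]. Qed.

Lemma ln_h p x : 0 < x < 1 -> ln (h p x) = p * ln (1 - x) + ln (K x).
Proof.
  intros Hx. unfold h, Rpower.
  rewrite ln_mult, ln_exp; [reflexivity | apply exp_pos | apply K_pos; lra].
Qed.

Lemma locally_unit_interval x : 0 < x < 1 -> locally x (fun y => 0 < y < 1).
Proof. intros Hx. apply filter_and; [apply open_gt | apply open_lt]; lra. Qed.

Lemma is_derive_ln_h p x : 0 < x < 1 -> is_derive (fun y => ln (h p y)) x (ln_h' p x).
Proof.
  intros Hx. pose proof (K_pos x ltac:(lra)).
  apply is_derive_ext_loc with (f := fun y => p * ln (1 - y) + ln (K y)).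
  - apply filter_imp with (2 := locally_unit_interval x Hx). intros y Hy. symmetry. apply ln_h, Hy.
  - auto_derive.
    + repeat split; try lra. exists ((E x / (1 - x) - K x) / (2 * x)). apply is_derive_K, Hx.
    + replace (Derive _ x) with ((E x / (1 - x) - K x) / (2 * x))
        by (symmetry; apply is_derive_unique, is_derive_K, Hx).
      unfold ln_h', EK. field. lra.
Qed.

Lemma is_derive_ln_h' p x : 0 < x < 1 -> is_derive (ln_h' p) x (ln_h'' p x).
Proof.
  intros Hx. pose proof (is_derive_EK x Hx) as Hr.
  unfold ln_h'. auto_derive.
  - repeat split; try lra; try nra. eexists. exact Hr.
  - replace (Derive _ x) with (riccati x (EK x) / (2 * x * (1 - x)))
      by (symmetry; apply is_derive_unique, Hr).
    unfold ln_h'', riccati. field. lra.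
Qed.

Lemma Q_le_sqr_EK x : 0 < x < 1 -> Q x <= (EK x - x) ^ 2.
Proof.
  intros Hx. destruct (Rle_dec (Q x) 0) as [|HQ]; [pose proof (pow2_ge_0 (EK x - x)); lra|].
  destruct (Rlt_dec x (2 / 3)) as [Hx23|Hx23].
  - pose proof (lower_barrier_le_EK x ltac:(lra) ltac:(lra)). unfold lower_barrier in *.
    pose proof (sqrt_pos (Q x)). pose proof (sqrt_sqrt (Q x) ltac:(lra)). nra.
  - pose proof (EK_le x Hx). pose proof (EK_ge x Hx).
    assert (0 <= (1 - 3 * x / 2 - (EK x - x)) * (- (EK x - x) - (1 - 3 * x / 2)))
      by (apply Rmult_le_pos; lra).
    unfold Q. nra.
Qed.

Lemma ln_h''_denominator_pos x : 0 < x < 1 -> 0 < 4 * x ^ 2 * (1 - x) ^ 2.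
Proof.
  intros Hx. assert (0 < x ^ 2) by (apply pow_lt; lra).
  assert (0 < (1 - x) ^ 2) by (apply pow_lt; lra). nra.
Qed.

Lemma ln_h''_nonpos p x : 7 / 32 <= p -> 0 < x < 1 -> ln_h'' p x <= 0.
Proof.
  intros Hp Hx. pose proof (Q_le_sqr_EK x Hx). pose proof (ln_h''_denominator_pos x Hx).
  assert (0 <= (p - 7 / 32) * x ^ 2) by (apply Rmult_le_pos; nra).
  assert (0 < / (4 * x ^ 2 * (1 - x) ^ 2)) by (apply Rinv_0_lt_compat; lra).
  unfold ln_h'', Rdiv, Q in *. nra.
Qed.

Lemma ln_h''_nonneg p x : p <= 0 -> 0 < x < 1 -> 0 <= ln_h'' p x.
Proof.
  intros Hp Hx. pose proof (EK_le x Hx). pose proof (EK_ge x Hx).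
  pose proof (ln_h''_denominator_pos x Hx).
  unfold ln_h'', Rdiv. apply Rmult_le_pos; [|left; apply Rinv_0_lt_compat; lra].
  assert (0 <= (EK x - x - (1 - 2 * x)) * (1 - 3 * x / 2 - (EK x - x))) by (apply Rmult_le_pos; lra).
  assert (0 <= - p * x ^ 2) by (apply Rmult_le_pos; nra).
  nra.
Qed.

Lemma log_concave_h p : 7 / 32 <= p -> log_concave_on (h p) 0 1.
Proof.
  intros Hp. split; [apply h_pos|].
  apply (concave_on_of_derive_nonincreasing _ (ln_h' p)); [apply is_derive_ln_h|].
  apply (nonincreasing_of_derive_nonpos _ (ln_h'' p)); [apply is_derive_ln_h'|].
  intros x Hx. apply ln_h''_nonpos; assumption.
Qed.

Lemma log_convex_h p : p <= 0 -> log_convex_on (h p) 0 1.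
Proof.
  intros Hp. split; [apply h_pos|].
  apply (convex_on_of_derive_nondecreasing _ (ln_h' p)); [apply is_derive_ln_h|].
  apply (nondecreasing_of_derive_nonneg _ (ln_h'' p)); [apply is_derive_ln_h'|].
  intros x Hx. apply ln_h''_nonneg; assumption.
Qed.

(* [1 / 4 - p] is the limit of [ln_h' p] at 0. *)
Lemma ln_h'_le p x : 0 < x < 1 -> ln_h' p x <= (1 / 4 - p) / (1 - x).
Proof.
  intros Hx. pose proof (EK_le x Hx).
  assert (Hid : (1 / 4 - p) / (1 - x) - ln_h' p x = (1 - x / 2 - EK x) / (2 * x * (1 - x)))
    by (unfold ln_h'; field; lra).
  assert (0 <= (1 - x / 2 - EK x) / (2 * x * (1 - x))) by (apply Rdiv_le_0_compat; nra).
  lra.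
Qed.

Lemma sqrt_Q_gt a : 1 / 16 < a ->
  exists y, 0 < y <= 1 / 2 /\ 1 - 3 * y / 2 - a * y ^ 2 < sqrt (Q y).
Proof.
  intros Ha. set (e := 2 * a - 1 / 8).
  destruct (exists_small (1 / 2) (2 * (3 * a + a ^ 2)) e) as [y [Hy Hye]];
    [lra | nra | unfold e; lra |].
  exists y. split; [exact Hy|].
  destruct (Rlt_dec (1 - 3 * y / 2 - a * y ^ 2) 0); [pose proof (sqrt_pos (Q y)); lra|].
  rewrite <- (sqrt_pow2 (1 - 3 * y / 2 - a * y ^ 2)) by lra. apply sqrt_lt_1_alt. split; [nra|].
  assert (Hid : Q y - (1 - 3 * y / 2 - a * y ^ 2) ^ 2 = y ^ 2 * (e - 3 * a * y - a ^ 2 * y ^ 2))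
    by (unfold Q, e; field).
  assert (0 < y ^ 2) by (apply pow_lt; lra).
  assert (a ^ 2 * y ^ 2 <= a ^ 2 * y) by (assert (0 <= a ^ 2) by nra; nra).
  assert (0 < e - 3 * a * y - a ^ 2 * y ^ 2) by nra.
  nra.
Qed.

Lemma ln_h'_gt p : p < 7 / 32 -> exists y, 0 < y < 1 /\ 1 / 4 - p < ln_h' p y.
Proof.
  intros Hp. set (a := 1 / 2 - 2 * p).
  destruct (sqrt_Q_gt a ltac:(unfold a; lra)) as [y [Hy Hsqrt]].
  exists y. split; [lra|].
  assert (HQ : 0 < Q y)
    by (pose proof (Q_antitone y (1 / 2) ltac:(lra) ltac:(lra)); unfold Q in *; lra).
  pose proof (lower_barrier_le_EK y ltac:(lra) HQ). unfold lower_barrier in *.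
  assert (Hid : ln_h' p y - (1 / 4 - p) = (EK y - (1 - y / 2 - a * y ^ 2)) / (2 * y * (1 - y)))
    by (unfold ln_h', a; field; lra).
  assert (0 < (EK y - (1 - y / 2 - a * y ^ 2)) / (2 * y * (1 - y))) by (apply Rdiv_lt_0_compat; nra).
  lra.
Qed.

Lemma log_concave_h_ge p : log_concave_on (h p) 0 1 -> 7 / 32 <= p.
Proof.
  intros [_ Hc]. destruct (Rle_lt_dec (7 / 32) p) as [|Hp]; [assumption | exfalso].
  destruct (ln_h'_gt p Hp) as [y [Hy Hgt]].
  set (L := 1 / 4 - p). set (del := ln_h' p y - L). fold L in Hgt.
  assert (HL : 0 < L) by (unfold L; lra). assert (Hdel : 0 < del) by (unfold del; lra).
  destruct (exists_small (y / 2) (2 * (L + del)) del) as [x [Hx Hxd]]; [lra | lra | lra |].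
  pose proof (derive_nonincreasing_of_concave_on _ (ln_h' p) 0 1 (is_derive_ln_h p) Hc x y
                ltac:(lra) ltac:(lra) ltac:(lra)).
  pose proof (ln_h'_le p x ltac:(lra)) as Hle. fold L in Hle.
  assert (L / (1 - x) < L + del).
  { apply (Rmult_lt_reg_r (1 - x)); [lra|]. unfold Rdiv. rewrite Rmult_assoc, Rinv_l; nra. }
  unfold del in *. lra.
Qed.

Lemma ln_h'_scaled_le p x : 1 / 2 < x < 1 -> (1 - x) * ln_h' p x <= - p + EK x.
Proof.
  intros Hx. pose proof (EK_ge x ltac:(lra)).
  assert (Hid : (1 - x) * ln_h' p x = - p + (EK x - (1 - x)) / (2 * x))
    by (unfold ln_h'; field; lra).
  assert ((EK x - (1 - x)) / (2 * x) <= EK x); [|lra].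
  apply (Rmult_le_reg_r (2 * x)); [lra|]. field_simplify; nra.
Qed.

Lemma log_convex_h_le p : log_convex_on (h p) 0 1 -> p <= 0.
Proof.
  intros [_ Hc]. destruct (Rle_lt_dec p 0) as [|Hp]; [assumption | exfalso].
  pose proof (derive_nondecreasing_of_convex_on _ (ln_h' p) 0 1 (is_derive_ln_h p) Hc)
    as Hmono.
  set (m := ln_h' p (1 / 2)).
  pose proof (Rabs_maj2 m). pose proof (Rabs_pos m).
  (* M is chosen so that, at x = 1 - exp (-2 M), (1 - x) ln_h' p x <= - p / 2 while
     (1 - x) ln_h' p (1/2) >= - p / 4. *)
  set (M := (4 + 2 * Rabs m) / p + 1).
  assert (HMp : M * p = 4 + 2 * Rabs m + p) by (unfold M; field; lra).
  assert (HM1 : 1 <= M).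
  { assert (0 <= (4 + 2 * Rabs m) / p) by (apply Rdiv_le_0_compat; lra).
    unfold M. lra. }
  clearbody M.
  set (s := exp (- M)).
  assert (Hs : 0 < s < 1) by (split; [apply exp_pos | rewrite <- exp_0; apply exp_increasing; lra]).
  assert (Hs2 : s ^ 2 * (2 * M) < 1).
  { assert (Hexp : s ^ 2 * exp (2 * M) = 1).
    { replace (s ^ 2 * exp (2 * M)) with (exp (- M + - M + 2 * M))
        by (unfold s; rewrite !exp_plus; ring).
      replace (- M + - M + 2 * M) with 0 by ring. apply exp_0. }
    pose proof (exp_ineq1 (2 * M) ltac:(lra)). nra. }
  pose proof (K_ge_neg_ln s Hs) as HK. unfold s in HK at 1. rewrite ln_exp, Ropp_involutive in HK.
  clearbody s.
  assert (Hx : 1 / 2 < 1 - s ^ 2 < 1) by (split; nra).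
  assert (HKpos : 0 < K (1 - s ^ 2)) by lra.
  assert (Hr : EK (1 - s ^ 2) <= p / 2).
  { apply Rle_trans with (2 / K (1 - s ^ 2)); [apply EK_le_div_K; lra|].
    apply (Rmult_le_reg_r (K (1 - s ^ 2))); [lra|].
    replace (2 / K (1 - s ^ 2) * K (1 - s ^ 2)) with 2 by (field; lra).
    assert (0 <= p * (K (1 - s ^ 2) - M)) by (apply Rmult_le_pos; lra). lra. }
  pose proof (ln_h'_scaled_le p (1 - s ^ 2) Hx).
  pose proof (Hmono (1 / 2) (1 - s ^ 2) ltac:(lra) ltac:(lra) ltac:(lra)) as Hm. fold m in Hm.
  replace (1 - (1 - s ^ 2)) with (s ^ 2) in * by ring.
  assert (s ^ 2 * Rabs m <= p / 4) by nra.
  nra.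
Qed.

Theorem theorem3 : forall p : R,
  (log_concave_on (h p) 0 1 <-> 7 / 32 <= p) /\
  (log_convex_on (h p) 0 1 <-> p <= 0).
Proof.
  intros p. split; split.
  - apply log_concave_h_ge.
  - apply log_concave_h.
  - apply log_convex_h_le.
  - apply log_convex_h.
Qed.
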